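(* Let $G=(V,E)$ be an undirected graph with positive edge weights $\mathsf{w}$, let $s\in V$ be a source, and suppose we are given, for every $v\in V$, the distance $d_s(v)$ from $s$, the number $\sigma_s(v)$ of shortest $s$-$v$ paths, and the list $P_s(v)$ of predecessors of $v$ (neighbors immediately preceding $v$ on shortest $s$-$v$ paths) in $G$. Let $\beta$ be a batch of edge insertions. Consider the algorithm \textsf{UpdateSSSPW}, using a min-priority queue $Q$ (heap) supporting insert, decrease-key and extract-min in logarithmic time: (i) For each $e=\{u,v\}\in\beta$: insert $e$ into $E$; if $d_s(v)\ge d_s(u)+\mathsf{w}(e)$, insert $v$ into $Q$ with priority $d_s(u)+\mathsf{w}(e)$, or, if $v$ is already in $Q$ with larger priority, decrease its priority to this value; symmetrically for $u$ with priority $d_s(v)+\mathsf{w}(e)$ when $d_s(u)\ge d_s(v)+\mathsf{w}(e)$. (ii) While $Q\neq\emptyset$: extract the minimum $(w,p)$; set $d_s(w)\leftarrow p$, $P_s(w)\leftarrow\emptyset$, $\sigma_s(w)\leftarrow 0$; for each incident edge $\{z,w\}$: if $d_s(w)=d_s(z)+\mathsf{w}(\{z,w\})$, add $z$ to $P_s(w)$ and set $\sigma_s(w)\leftarrow\sigma_s(w)+\sigma_s(z)$; if $d_s(z)\ge d_s(w)+\mathsf{w}(\{z,w\})$, insert $z$ into $Q$ with priority $d_s(w)+\mathsf{w}(\{z,w\})$, or decrease its priority to this value if it is already in $Q$ with larger priority. Then the time required by \textsf{UpdateSSSPW} to update the distances, the numbers of shortest paths and the lists of predecessors is $O(|\b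eta|\log|\beta|+\|A\|\log\|A\|)$.
   Context: $A$ denotes the set of affected nodes, i.e. nodes whose distance from $s$ or whose number of shortest paths from $s$ changes as a consequence of inserting the batch $\beta$; $\|A\|$ denotes $|A|$ plus the number of edges having at least one endpoint in $A$; $|\beta|$ is the number of edges in the batch. *)

From HB Require Import structures.
From mathcomp Require Import all_boot all_order all_algebra.
Set Implicit Arguments. Unset Strict Implicit. Unset Printing Implicit Defensive.
Import Order.TTheory GRing.Theory Num.Theory.
Local Open Scope ring_scope.

Section Graphs.
Variables (R : realDomainType) (V : finType).

Definition spath (G : rel V) (s v : V) (p : seq V) : bool :=
  [&& path G s p, last s p == v & uniq (s :: p)].

Definition pweight (wt : V -> V -> R) (s : V) (p : seq V) : R :=
  \sum_(x <- pairmap wt s p) x.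

(* d is the shortest-path distance from s to v in G (weights wt);
   simple paths have at most #|V| - 1 edges. *)
Definition isdist (G : rel V) (wt : V -> V -> R) (s v : V) (d : R) : bool :=
  [exists n : 'I_#|V|, exists p : n.-tuple V, spath G s v p && (pweight wt s p == d)]
  && [forall n : 'I_#|V|, forall p : n.-tuple V, spath G s v p ==> (d <= pweight wt s p)].

(* number of s-v paths of weight d (= sigma_s(v) when d is the distance) *)
Definition nsp (G : rel V) (wt : V -> V -> R) (s v : V) (d : R) : nat :=
  (\sum_(n < #|V|) #|[set p : n.-tuple V | spath G s v p && (pweight wt s p == d)]|)%N.

Definition addedge (G : rel V) (u v : V) : rel V :=
  fun x y => [|| G x y, (x == u) && (y == v) | (x == v) && (y == u)].

Definition addbatch (G : rel V) (beta : seq (V * V)) : rel V :=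
  foldl (fun g e => addedge g e.1 e.2) G beta.

Definition affected (G' : rel V) (wt : V -> V -> R) (s : V)
    (d0 : V -> R) (sg0 : V -> nat) : {set V} :=
  [set v | ~~ (isdist G' wt s v (d0 v) && (nsp G' wt s v (d0 v) == sg0 v))].

(* ||A|| = |A| + number of (undirected) edges of G' with an endpoint in A *)
Definition normA (G' : rel V) (A : {set V}) : nat :=
  (#|A| + #|[set e : {set V} | [exists u, exists v,
        [&& e == [set u; v], G' u v & (u \in A) || (v \in A)]]]|)%N.

Record state := State {
  dd : V -> R;
  sg : V -> nat;
  PP : V -> {set V};
  EE : rel V;
  QQ : V -> option R;          (* heap contents: node |-> priority *)
  batch : seq (V * V);         (* edges of beta still to be inserted *)
  cur : option (V * {set V})   (* node being scanned, incident edges left *)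
}.

Definition upd {T : Type} (f : V -> T) (z : V) (a : T) : V -> T :=
  fun x => if x == z then a else f x.

Definition qsize (Q : V -> option R) : nat := #|[pred x | isSome (Q x)]|.

Definition heapcost (n : nat) : nat := (trunc_log 2 n).+1.

Definition relax (d : V -> R) (Q : V -> option R) (z : V) (p : R)
    : (V -> option R) * nat :=
  if p <= d z then
    match Q z with
    | None => (upd Q z (Some p), heapcost (qsize Q))
    | Some q => if p < q then (upd Q z (Some p), heapcost (qsize Q)) else (Q, 1%N)
    end
  else (Q, 1%N).

Variable wt : V -> V -> R.

Definition batch_step (st : state) (u v : V) (rest : seq (V * V)) : state * nat :=
  let d := dd st in
  let (Q1, c1) := relax d (QQ st) v (d u + wt u v) in
  let (Q2, c2) := relax d Q1 u (d v + wt v u) in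
  (State d (sg st) (PP st) (addedge (EE st) u v) Q2 rest None, (1 + c1 + c2)%N).

Definition extract_step (st : state) (w : V) (p : R) : state * nat :=
  ((State (upd (dd st) w p) (upd (sg st) w 0%N) (upd (PP st) w set0) (EE st)
         (upd (QQ st) w None) (batch st) (Some (w, [set z | EE st z w]))),
   (1 + heapcost (qsize (QQ st)))%N).

Definition scan_step (st : state) (w : V) (N : {set V}) (z : V) : state * nat :=
  let d := dd st in
  let isp := d w == d z + wt z w in
  let P' := if isp then upd (PP st) w (z |: PP st w) else PP st in
  let s' := if isp then upd (sg st) w (sg st w + sg st z)%N else sg st in
  let (Q', c) := relax d (QQ st) z (d w + wt z w) in
  (State d s' P' (EE st) Q' (batch st) (Some (w, N :\ z)), (1 + c)%N).

Inductive step : state -> state -> nat -> Prop :=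
| StepBatch st u v rest :
    batch st = (u, v) :: rest -> cur st = None ->
    step st (batch_step st u v rest).1 (batch_step st u v rest).2
| StepExtract st w p :
    batch st = [::] -> cur st = None -> QQ st w = Some p ->
    (forall z q, QQ st z = Some q -> p <= q) ->
    step st (extract_step st w p).1 (extract_step st w p).2
| StepScan st w N z :
    cur st = Some (w, N) -> z \in N ->
    step st (scan_step st w N z).1 (scan_step st w N z).2
| StepDone st w :
    cur st = Some (w, set0) ->
    step st (State (dd st) (sg st) (PP st) (EE st) (QQ st) (batch st) None) 1.

Inductive steps : state -> state -> nat -> Prop :=
| steps_refl st : steps st st 0
| steps_cons st1 st2 st3 k1 k2 :
    step st1 st2 k1 -> steps st2 st3 k2 -> steps st1 st3 (k1 + k2)%N.

Definition init_state (G : rel V) (beta : seq (V * V)) (d0 : V -> R)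
    (sg0 : V -> nat) (P0 : V -> {set V}) : state :=
  State d0 sg0 P0 G (fun _ => None) beta None.

End Graphs.

Definition nlogn (n : nat) : nat := (n * (trunc_log 2 n).+1)%N.

From HB Require Import structures.
From mathcomp Require Import all_boot all_order all_algebra lra zify.
Import Order.TTheory GRing.Theory Num.Theory.
Local Open Scope ring_scope.
Set Implicit Arguments. Unset Strict Implicit. Unset Printing Implicit Defensive.

(* Every node z that enters the heap with priority q is the endpoint of a simple
   path of the new graph that uses an inserted edge and has weight at most
   q <= d_s(z); such a node is affected, since either its distance drops or it
   gains a shortest path.  So the heap never holds more than |A| nodes and each
   heap operation costs O(log |A|).  Extracted (settled) nodes are affected too,
   and they are never re-inserted: with positive weights every later priority
   exceeds their distance.  A potential argument charges O(log |A|) to each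
   batch edge and O((2 + deg x) log |A|) to each settled node x, and the degrees
   of the nodes of A sum to at most 2 ||A||. *)

Section EdgeInsertion.
Variable V : finType.

Lemma addedge_sym (E : rel V) u v : symmetric E -> symmetric (addedge E u v).
Proof.
move=> Esym x y; rewrite /addedge Esym [(y == u) && _]andbC [(y == v) && _]andbC.
by congr orb; rewrite orbC.
Qed.

Lemma addbatch_sym (E : rel V) bs : symmetric E -> symmetric (addbatch E bs).
Proof. by elim: bs E => [|[u v] bs IH] E Esym //=; apply/IH/addedge_sym. Qed.

Lemma addbatch_sub (E : rel V) bs : subrel E (addbatch E bs).
Proof.
by elim: bs E => [|[u v] bs IH] E x y Exy //=; apply: IH; rewrite /addedge Exy.
Qed.

Lemma set2_eq_cases (a b a' b' : V) : [set a; b] = [set a'; b'] ->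
  (a = a' /\ b = b') \/ (a = b' /\ b = a').
Proof.
move=> eq_ab.
have : a \in [set a'; b'] by rewrite -eq_ab set21.
have : b \in [set a'; b'] by rewrite -eq_ab set22.
have : a' \in [set a; b] by rewrite eq_ab set21.
have : b' \in [set a; b] by rewrite eq_ab set22.
by rewrite !inE => /orP[]/eqP-> /orP[]/eqP-> /orP[]/eqP h1 /orP[]/eqP h2; subst; auto.
Qed.

(* Orienting each edge by [enum_rank] maps incidences injectively into edges
   times [bool]. *)
Lemma sum_deg_le_normA (E : rel V) (X : {set V}) :
  (\sum_(x in X) (2 + #|[set z | E z x]|) <= 2 * normA E X)%N.
Proof.
rewrite big_split sum_nat_const /normA mulnDr [(#|X| * _)%N]mulnC leq_add2l.
set Es := [set e : {set V} | _].
have -> : (\sum_(x in X) #|[set z | E z x]| =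
           #|[set p : V * V | (p.1 \in X) && E p.2 p.1]|)%N.
  rewrite -sum1_card; under eq_bigr => x _ do rewrite -sum1_card.
  by rewrite pair_big_dep; apply: eq_bigl => -[a b]; rewrite !inE.
set S := [set p : V * V | _].
pose orient (p : V * V) := ([set p.1; p.2], (enum_rank p.1 < enum_rank p.2)%N).
have orient_inj : {in S &, injective orient}.
  move=> [a b] [a' b'] _ _ [/set2_eq_cases [[-> ->]|[-> ->]]] // lt_ab.
  suff /enum_rank_inj-> : enum_rank a' = enum_rank b' by [].
  move: lt_ab; case: (ltngtP (enum_rank b') (enum_rank a')) => // h _.
  exact: ord_inj.
rewrite -(card_in_imset orient_inj) mulnC -[2%N](card_bool) -cardsT -cardsX.
apply: subset_leq_card; apply/subsetP => _ /imsetP[[a b] + ->].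
rewrite !inE /= => /andP[aX Eba]; rewrite andbT.
by apply/existsP; exists b; apply/existsP; exists a; rewrite setUC eqxx Eba aX orbT.
Qed.

End EdgeInsertion.

Section PathWeights.
Variables (R : realDomainType) (V : finType) (wt : V -> V -> R).

Lemma pweight_cons a y p : pweight wt a (y :: p) = wt a y + pweight wt y p.
Proof. by rewrite /pweight /= big_cons. Qed.

Lemma pweight_cat a p q :
  pweight wt a (p ++ q) = pweight wt a p + pweight wt (last a p) q.
Proof. by rewrite /pweight pairmap_cat big_cat. Qed.

Lemma pweight_rcons a p z :
  pweight wt a (rcons p z) = pweight wt a p + wt (last a p) z.
Proof. by rewrite -cats1 pweight_cat pweight_cons {2}/pweight big_nil addr0. Qed.

Lemma pweight_ge0 a p : (forall x y, 0 <= wt x y) -> 0 <= pweight wt a p.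
Proof.
move=> wt_ge0; elim: p a => [|y p IH] a; first by rewrite /pweight big_nil.
by rewrite pweight_cons addr_ge0.
Qed.

Lemma spath_sub (E E' : rel V) s v p : subrel E E' -> spath E s v p -> spath E' s v p.
Proof. by move=> sEE' /and3P[Ep lastp up]; rewrite /spath (sub_path sEE' Ep) lastp. Qed.

Lemma spath_size (E : rel V) s v p : spath E s v p -> (size p < #|V|)%N.
Proof. by case/and3P=> _ _ /card_uniqP /= <-; apply: max_card. Qed.

Lemma isdist_le (E : rel V) s v d p :
  isdist E wt s v d -> spath E s v p -> d <= pweight wt s p.
Proof.
case/andP=> _ /forallP dmin Ep.
by have /forallP/(_ (in_tuple p))/implyP := dmin (Ordinal (spath_size Ep)); apply.
Qed.

Lemma spath_rcons (E : rel V) s x z p :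
  spath E s x p -> E x z -> z \notin s :: p -> spath E s z (rcons p z).
Proof.
case/and3P=> Ep /eqP lastp up Exz zNp.
by rewrite /spath rcons_path Ep lastp Exz last_rcons eqxx -rcons_cons rcons_uniq zNp up.
Qed.

Lemma spath_prefix (E : rel V) s x z p : (forall a b, 0 <= wt a b) ->
  spath E s x p -> z \in s :: p ->
  exists q, spath E s z q /\ pweight wt s q <= pweight wt s p.
Proof.
move=> wt_ge0 Ep; rewrite in_cons => /predU1P[->|zp].
  by exists [::]; rewrite /spath /= eqxx {1}/pweight big_nil pweight_ge0.
case/and3P: Ep; case/path.splitP: zp => p1 p2.
rewrite cat_path -cat_cons cat_uniq => /andP[Ep1 _] _ /andP[up1 _].
exists (rcons p1 z); rewrite /spath Ep1 last_rcons eqxx up1 pweight_cat.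
by split; rewrite // lerDl pweight_ge0.
Qed.

End PathWeights.

Lemma relax_cost (R : realDomainType) (V : finType) (d : V -> R) Q z p :
  ((relax d Q z p).2 <= heapcost (qsize Q))%N.
Proof. by rewrite /relax; case: ifP => // _; case: (Q z) => [q|] //; case: ifP. Qed.

Lemma heapcost_mono : {homo heapcost : m n / (m <= n)%N}.
Proof. by move=> m n le_mn; rewrite /heapcost ltnS leq_trunc_log. Qed.

Section UpdateSSSPW.
Variables (R : realDomainType) (V : finType) (G : rel V) (wt : V -> V -> R)
  (s : V) (beta : seq (V * V)) (d0 : V -> R) (sg0 : V -> nat).
Hypothesis G_sym : symmetric G.
Hypothesis wt_sym : forall x y, wt x y = wt y x.
Hypothesis wt_gt0 : forall x y, 0 < wt x y.
Hypothesis beta_new : forall e, e \in beta -> ~~ G e.1 e.2.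
Hypothesis d0_dist : forall v, isdist G wt s v (d0 v).
Hypothesis sg0_nsp : forall v, sg0 v = nsp G wt s v (d0 v).

Local Notation G' := (addbatch G beta).
Local Notation A := (affected G' wt s d0 sg0).

Let wt_ge0 x y : 0 <= wt x y. Proof. exact: ltW. Qed.

Definition new_path_le (x : V) (p : R) : Prop :=
  exists P, [&& spath G' s x P, pweight wt s P <= p & ~~ path G s P].

(* Either the distance of [x] drops, or [P] is a shortest path absent from [G]. *)
Lemma new_path_affected x p : new_path_le x p -> p <= d0 x -> x \in A.
Proof.
case=> P /and3P[G'P leP newP] le_p.
rewrite inE negb_and; have [distx /=|//] := boolP (isdist G' wt s x (d0 x)).
have wP : pweight wt s P = d0 x.
  by apply/eqP; rewrite eq_le (le_trans leP le_p) (isdist_le distx G'P).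
have sub_paths n : [set p : n.-tuple V | spath G s x p && (pweight wt s p == d0 x)]
    \subset [set p : n.-tuple V | spath G' s x p && (pweight wt s p == d0 x)].
  apply/subsetP => t; rewrite !inE => /andP[Gt ->].
  by rewrite andbT (spath_sub (@addbatch_sub _ G beta) Gt).
set n := Ordinal (spath_size G'P).
rewrite sg0_nsp neq_ltn; apply/orP; right.
rewrite /nsp (bigD1 n) // [X in (_ < X)%N](bigD1 n) //= -addSn.
apply: leq_add; last by apply: leq_sum => i _; exact: subset_leq_card (sub_paths i).
apply/proper_card/properP; split => //; exists (in_tuple P).
  by rewrite inE G'P wP eqxx.
by rewrite inE /spath (negbTE newP).
Qed.

Lemma new_path_extend x z P p :
  spath G' s x P -> pweight wt s P <= p -> ~~ (path G s P && G x z) ->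
  G' x z -> p + wt x z <= d0 z -> new_path_le z (p + wt x z).
Proof.
move=> G'P leP newPz G'xz le_d0z; have wxz := wt_gt0 x z.
have [zP | zNP] := boolP (z \in s :: P).
  have [Q [G'Q leQ]] := spath_prefix wt_ge0 G'P zP.
  have [GQ | newQ] := boolP (path G s Q); last first.
    by exists Q; rewrite G'Q newQ andbT; lra.
  have : spath G s z Q by case/and3P: G'Q => _ lastQ uQ; rewrite /spath GQ lastQ.
  by move/(isdist_le (d0_dist z)); lra.
have lastP : last s P = x by case/and3P: G'P => _ /eqP.
exists (rcons P z); rewrite (spath_rcons G'P) // rcons_path pweight_rcons lastP newPz.
by rewrite andbT; lra.
Qed.

Definition heap_ok (d : V -> R) (M : {set V}) (Q : V -> option R) : Prop :=
  forall x q, Q x = Some q ->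
    [/\ q <= d x, x \notin M, new_path_le x q & forall y, y \in M -> d y <= q].

Local Notation H := (heapcost #|A|).

Lemma heap_ok_cost d M Q : heap_ok d M Q -> (forall x, x \notin M -> d x = d0 x) ->
  (heapcost (qsize Q) <= H)%N.
Proof.
move=> okQ dM; apply/heapcost_mono/subset_leq_card/subsetP => x; rewrite inE.
case Qx: (Q x) => [q|] // _; have [le_q xNM newx _] := okQ x q Qx.
by apply: new_path_affected newx _; rewrite -dM.
Qed.

Lemma relax_cost_le d M Q z p : heap_ok d M Q -> (forall x, x \notin M -> d x = d0 x) ->
  ((relax d Q z p).2 <= H)%N.
Proof. by move=> okQ dM; apply: leq_trans (relax_cost _ _ _ _) (heap_ok_cost okQ dM). Qed.

Lemma relax_heap_ok d M Q z p : heap_ok d M Q ->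
  (p <= d z -> [/\ z \notin M, new_path_le z p & forall y, y \in M -> d y <= p]) ->
  heap_ok d M (relax d Q z p).1.
Proof.
move=> okQ okz; rewrite /relax; case: ifP => // le_pz.
have [zNM newz Mz] := okz le_pz.
have okQz : heap_ok d M (upd Q z (Some p)).
  by move=> x q; rewrite /upd; case: eqP => [-> [<-]|_]; [split | apply: okQ].
by case: (Q z) => [q|] //=; case: ifP.
Qed.

Record run_inv (st : state R V) (M : {set V}) : Prop := RunInv {
  inv_edges : addbatch (EE st) (batch st) = G';
  inv_batch : {subset batch st <= beta};
  inv_unsettled : forall x, x \notin M -> dd st x = d0 x;
  inv_settled : forall x, x \in M -> dd st x <= d0 x /\ new_path_le x (dd st x);
  inv_heap : heap_ok (dd st) M (QQ st);
  inv_batch_unsettled : batch st != [::] -> M = set0;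
  inv_scan : forall w N, cur st = Some (w, N) ->
    [/\ w \in M, forall z, z \in N -> G' z w & forall y, y \in M -> dd st y <= dd st w]
}.

Lemma batch_step_inv st u v rest :
  run_inv st set0 -> batch st = (u, v) :: rest ->
  run_inv (batch_step wt st u v rest).1 set0 /\ ((batch_step wt st u v rest).2 <= 3 * H)%N.
Proof.
move=> [edges sub_beta unsettled _ okQ _ _] bst.
have d_d0 x : dd st x = d0 x by apply: unsettled; rewrite inE.
have newuv : ~~ G u v by apply: (beta_new (e := (u, v))); rewrite sub_beta // bst mem_head.
have G'uv : G' u v.
  by rewrite -edges bst /=; apply: addbatch_sub; rewrite /addedge !eqxx orbT.
have relax_new a b Q : heap_ok (dd st) set0 Q -> ~~ G a b -> G' a b ->
    heap_ok (dd st) set0 (relax (dd st) Q b (dd st a + wt a b)).1.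
  move=> okQ' newab G'ab; apply: relax_heap_ok => // le_ab.
  split=> [||y]; rewrite ?inE // !d_d0 in le_ab *.
  have /andP[/existsP[n /existsP[P /andP[GP /eqP wP]]] _] := d0_dist a.
  apply: (new_path_extend (P := P)); rewrite ?wP ?negb_and ?newab ?orbT //.
  exact: spath_sub (@addbatch_sub _ G beta) GP.
rewrite /batch_step; case E1: (relax (dd st) (QQ st) v _) => [Q1 c1].
case E2: (relax (dd st) Q1 u _) => [Q2 c2] /=.
have okQ1 : heap_ok (dd st) set0 Q1 by rewrite -[Q1]/((Q1, c1).1) -E1; apply: relax_new.
have okQ2 : heap_ok (dd st) set0 Q2.
  by rewrite -[Q2]/((Q2, c2).1) -E2; apply: relax_new; rewrite // (G_sym, addbatch_sym).
have c1_le : (c1 <= H)%N.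
  by rewrite -[c1]/((Q1, c1).2) -E1; apply: relax_cost_le okQ unsettled.
have c2_le : (c2 <= H)%N.
  by rewrite -[c2]/((Q2, c2).2) -E2; apply: relax_cost_le okQ1 unsettled.
split; last by rewrite /heapcost in c1_le c2_le *; lia.
split=> //=; first by rewrite -edges bst.
- by move=> e e_rest; apply: sub_beta; rewrite bst inE e_rest orbT.
- by move=> x; rewrite inE.
Qed.

Lemma extract_step_inv st M w p :
  run_inv st M -> batch st = [::] -> QQ st w = Some p ->
  (forall z q, QQ st z = Some q -> p <= q) ->
  [/\ w \notin M, run_inv (extract_step st w p).1 (w |: M)
    & ((extract_step st w p).2 <= 1 + H)%N].
Proof.
move=> [edges _ unsettled settled okQ _ _] bst Qw pmin.
have [le_pw wNM neww Mp] := okQ w p Qw.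
have EG' : EE st = G' by rewrite -edges bst.
split=> //; first split=> /=; rewrite ?bst //.
- move=> x; rewrite in_setU1 negb_or /upd => /andP[/negbTE-> xNM]; exact: unsettled.
- move=> x; rewrite in_setU1 /upd; case: eqP => [-> _|_ /= xM]; last exact: settled.
  by rewrite -(unsettled w wNM).
- move=> x q; rewrite /upd; case: eqP => // /eqP xw Qx.
  have [le_qx xNM newx Mq] := okQ x q Qx.
  split=> //; first by rewrite in_setU1 negb_or xw.
  move=> y; rewrite in_setU1; case: eqP => [_ _|_ /= /Mq //]; exact: pmin Qx.
- move=> _ _ [<- <-]; split=> [||y]; rewrite ?setU11 //.
    by move=> z; rewrite inE EG'.
  by rewrite /upd eqxx in_setU1; case: eqP => [_ _|_ /= /Mp].
- by rewrite /= leq_add2l (heap_ok_cost okQ unsettled).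
Qed.

Lemma scan_step_inv st M w N z :
  run_inv st M -> cur st = Some (w, N) -> z \in N ->
  run_inv (scan_step wt st w N z).1 M /\ ((scan_step wt st w N z).2 <= 1 + H)%N.
Proof.
move=> [edges sub_beta unsettled settled okQ batch_first scan] cst zN.
have [wM G'N Mw] := scan w N cst.
have [_ [P /and3P[G'P leP newP]]] := settled w wM.
have wzw := wt_gt0 z w.
rewrite /scan_step; case E: (relax (dd st) (QQ st) z _) => [Q' c] /=.
have okQ' : heap_ok (dd st) M Q'.
  rewrite -[Q']/((Q', c).1) -E; apply: relax_heap_ok okQ _ => le_z.
  have zNM : z \notin M.
    by apply/negP => zM; have := Mw z zM; lra.
  split=> //; last by move=> y /Mw le_yw; lra.
  rewrite wt_sym; apply: new_path_extend G'P leP _ _ _.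
  - by rewrite (negbTE newP).
  - by rewrite addbatch_sym // G'N.
  - by rewrite -wt_sym -(unsettled z zNM).
have c_le : (c <= H)%N by rewrite -[c]/((Q', c).2) -E; apply: relax_cost_le okQ unsettled.
split; last by rewrite leq_add2l.
split=> //= _ _ [<- <-]; split=> // z'; rewrite in_setD1 => /andP[_]; exact: G'N.
Qed.

(* The [.+1] pays for the closing [StepDone]. *)
Definition scan_left (c : option (V * {set V})) : nat :=
  if c is Some (_, N) then #|N|.+1 else 0.

Definition potential (st : state R V) : nat := size (batch st) + scan_left (cur st).

Definition charge (M : {set V}) : nat := \sum_(x in M) (2 + #|[set z | G' z x]|).

Lemma potential_batch_step st u v rest :
  potential (batch_step wt st u v rest).1 = size rest.
Proof.
rewrite /batch_step; case: (relax _ _ v _) => Q1 c1.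
by case: (relax _ Q1 u _) => Q2 c2; rewrite /potential /= addn0.
Qed.

Lemma potential_scan_step st w N z :
  potential (scan_step wt st w N z).1 = (size (batch st) + #|N :\ z|.+1)%N.
Proof. by rewrite /scan_step; case: (relax _ _ z _). Qed.

Lemma charge_setU1 w (M : {set V}) : w \notin M ->
  charge (w |: M) = (2 + #|[set z | G' z w]| + charge M)%N.
Proof. exact: big_setU1. Qed.

(* Settling a node [w] pays for its extraction and prepays its [deg w] scans. *)
Lemma step_amortized st st' k M : run_inv st M -> step wt st st' k ->
  exists2 M', run_inv st' M' &
    (k + 3 * H * (potential st' + charge M) <= 3 * H * (potential st + charge M'))%N.
Proof.
have H_gt0 : (0 < H)%N by [].
move=> + stp; case: stp => {st st' k} [st u v rest bst cst|st w p bst cst Qw pmin|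
    st w N z cst zN|st w cst] inv_st.
- have M0 : M = set0 by apply: (inv_batch_unsettled inv_st); rewrite bst.
  subst M; have [inv' cost] := batch_step_inv inv_st bst.
  by exists set0 => //; rewrite potential_batch_step /potential bst cst /=; nia.
- have [wNM inv' /= cost] := extract_step_inv inv_st bst Qw pmin.
  have EG' : EE st = G' by rewrite -(inv_edges inv_st) bst.
  by exists (w |: M) => //; rewrite charge_setU1 // /potential /= bst cst EG'; nia.
- have [inv' cost] := scan_step_inv inv_st cst zN.
  by exists M => //; rewrite potential_scan_step /potential cst /= (cardsD1 z N) zN; nia.
- exists M; first by case: inv_st => *; split.
  by rewrite /potential cst /= cards0; nia.
Qed.

Lemma steps_amortized st st' k M : run_inv st M -> steps wt st st' k ->
  exists2 M', run_inv st' M' &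
    (k + 3 * H * (potential st' + charge M) <= 3 * H * (potential st + charge M'))%N.
Proof.
move=> inv_st run; elim: run M inv_st => {st st' k} [st|st1 st2 st3 k1 k2 step1 _ IH] M inv1.
  by exists M; rewrite ?add0n.
have [M2 inv2 cost1] := step_amortized inv1 step1.
have [M3 inv3 cost2] := IH M2 inv2.
by exists M3 => //; nia.
Qed.

Lemma settled_affected st M : run_inv st M -> M \subset A.
Proof.
move=> inv_st; apply/subsetP => x /(inv_settled inv_st) [le_d0 newx].
exact: new_path_affected newx le_d0.
Qed.

Lemma updateSSSPW_cost (P0 : V -> {set V}) st k :
  steps wt (init_state G beta d0 sg0 P0) st k ->
  (k <= 3 * H * (size beta + 2 * normA G' A))%N.
Proof.
have inv0 : run_inv (init_state G beta d0 sg0 P0) set0.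
  by split=> // x; rewrite inE.
case/(steps_amortized inv0) => M invM.
have chargeM : (charge M <= 2 * normA G' A)%N.
  apply: leq_trans (sum_deg_le_normA _ _); rewrite [X in (_ <= X)%N](big_setID M) /=.
  by rewrite (setIidPr (settled_affected invM)) leq_addr.
by rewrite /potential /= {1}/charge big_set0; nia.
Qed.

End UpdateSSSPW.

Lemma heapcost_mul_le a b n : (a <= n)%N -> (b * heapcost a <= nlogn b + nlogn n)%N.
Proof.
move=> le_an; have [le_ab|lt_ba] := leqP a b.
  by apply: leq_trans (leq_addr _ _); apply: leq_mul => //; apply: heapcost_mono.
apply: leq_trans (leq_addl _ _); apply: leq_mul; last exact: heapcost_mono.
exact: ltnW (leq_trans lt_ba le_an).
Qed.

Theorem theorem2 :
  exists c : nat,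
  forall (R : realDomainType) (V : finType) (G : rel V) (wt : V -> V -> R)
    (s : V) (beta : seq (V * V))
    (d0 : V -> R) (sg0 : V -> nat) (P0 : V -> {set V}),
    symmetric G -> irreflexive G ->
    (forall x y, wt x y = wt y x) -> (forall x y, 0 < wt x y) ->
    (forall e, e \in beta -> (e.1 != e.2) && ~~ G e.1 e.2) ->
    uniq [seq [set e.1; e.2] | e <- beta] ->
    (forall v, isdist G wt s v (d0 v)) ->
    (forall v, sg0 v = nsp G wt s v (d0 v)) ->
    (forall v, P0 v = [set u | G u v & d0 v == d0 u + wt u v]) ->
    forall (st : state R V) (k : nat),
      steps wt (init_state G beta d0 sg0 P0) st k ->
      (k <= c * (1 + nlogn (size beta)
                   + nlogn (normA (addbatch G beta)
                              (affected (addbatch G beta) wt s d0 sg0))))%N.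
Proof.
exists 15 => R V G wt s beta d0 sg0 P0 G_sym _ wt_sym wt_gt0 beta_new _ d0_dist sg0_nsp _
  st k run.
have beta_new' e : e \in beta -> ~~ G e.1 e.2 by case/beta_new/andP.
have := updateSSSPW_cost G_sym wt_sym wt_gt0 beta_new' d0_dist sg0_nsp run.
set n := normA _ _; set a := #|_|.
have le_an : (a <= n)%N by apply: leq_addr.
have := heapcost_mul_le (size beta) le_an; have := heapcost_mul_le n le_an.
nia.
Qed.
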